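(* For all positive integers $n$ and $k$, $$\sum_{r=1}^{k}(-1)^{k-r}\sum_{\substack{k_1+k_2+\cdots+k_r=k\\ k_i\geq 1}}\ \prod_{i=1}^{r}\binom{n}{k_i}=\binom{n+k-1}{k},$$ where the inner sum runs over all ordered $r$-tuples $(k_1,\dots,k_r)$ of positive integers with sum $k$ (i.e., over all compositions of $k$ into $r$ parts).
   Context: Binomial coefficients $\binom{m}{j}$ for nonnegative integers $m$ and $j$ are the usual ones, with $\binom{m}{j}=0$ when $j>m$. *)

From mathcomp Require Import all_boot all_order all_algebra.
Set Implicit Arguments. Unset Strict Implicit. Unset Printing Implicit Defensive.
Import GRing.Theory Num.Theory.

(* A composition of k into r parts: an r-tuple (k_1,...,k_r) of positive integers
   with sum k.  Each part is <= k, so we encode parts as elements of 'I_k.+1. *)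
Definition is_composition (k r : nat) (c : {ffun 'I_r -> 'I_k.+1}) : bool :=
  [forall i, 0 < (c i : nat)] && ((\sum_(i < r) (c i : nat))%N == k).

From mathcomp Require Import all_boot all_order all_algebra.
From mathcomp Require Import zify.
Set Implicit Arguments. Unset Strict Implicit. Unset Printing Implicit Defensive.
Import GRing.Theory Num.Theory.
Local Open Scope ring_scope.

(* The composition sums S_r(m) = sum_(k_1 + ... + k_r = m) prod_i 'C(n, k_i) are
   the coefficients of f^r for f = (1 + x)^n - 1, so for m <= k the alternating sum
   h(m) = sum_(r <= k) (-1)^r S_r(m) is the m-th coefficient of 1/(1 + f) = (1 + x)^-n,
   namely (-1)^m 'C(n - 1 + m, m).  Without power series: peeling off the first part
   of a composition gives h(0) = 1 and sum_(j <= m) 'C(n, j) h(m - j) = 0 for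
   0 < m <= k; the sequence (-1)^m 'C(n - 1 + m, m) satisfies the same identities
   (induction on n with Pascal's rule), and these identities determine the sequence. *)

Lemma signr_subn (R : pzRingType) r k : (r <= k)%N ->
  (-1) ^+ (k - r) = (-1) ^+ k * (-1) ^+ r :> R.
Proof. by move=> le_rk; rewrite -{2}(subnK le_rk) exprD -mulrA -expr2 sqrr_sign mulr1. Qed.

Section BinomialConvolution.
Variable R : pzRingType.

Definition binom_conv (n : nat) (X : nat -> R) (m : nat) : R :=
  \sum_(j < m.+1) 'C(n, j)%:R * X (m - j)%N.

Lemma binom_convE n X m :
  binom_conv n X m.+1 = X m.+1 + \sum_(j < m.+1) 'C(n, j.+1)%:R * X (m - j)%N.
Proof. by rewrite /binom_conv big_ord_recl bin0 mul1r. Qed.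

Lemma binom_conv_pascal n X m :
  binom_conv n.+1 X m.+1 = binom_conv n X m.+1 + binom_conv n X m.
Proof.
rewrite !binom_convE /binom_conv -addrA; congr (_ + _); rewrite -big_split /=.
by apply: eq_bigr => j _; rewrite binS natrD mulrDl.
Qed.

Lemma binom_conv_shift_add (Y Z : nat -> R) n m :
  Y 0%N = Z 0%N -> (forall i, Y i.+1 + Y i = Z i.+1) ->
  binom_conv n Y m.+1 + binom_conv n Y m = binom_conv n Z m.+1.
Proof.
move=> YZ0 YZS; rewrite /binom_conv [in RHS]big_ord_recr [in LHS]big_ord_recr /=.
rewrite subnn YZ0 addrAC -big_split /=; congr (_ + _); apply: eq_bigr => j _.
by rewrite subSn -?mulrDr ?YZS // -ltnS.
Qed.

(* The m-th coefficient of (1 + x)^-(p+1). *)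
Definition neg_binom (p m : nat) : R := (-1) ^+ m * 'C(p + m, m)%:R.

Lemma binom_conv_neg_binom p m : binom_conv p.+1 (neg_binom p) m.+1 = 0.
Proof.
elim: p m => [|p IHp] m.
  rewrite binom_convE big_ord_recl big1 => [|j _]; last by rewrite bin_small ?mul0r.
  by rewrite /neg_binom !add0n !binn subn0 exprS mulN1r mul1r !mulr1 addr0 addNr.
rewrite binom_conv_pascal (binom_conv_shift_add (Z := neg_binom p)) //.
  by rewrite /neg_binom !bin0.
move=> i; rewrite /neg_binom exprS mulN1r !mulNr addnS binS natrD mulrDr.
by rewrite opprD addrNK addSnnS.
Qed.

Lemma binom_conv_eq0_uniq n k (X Y : nat -> R) :
  X 0%N = Y 0%N ->
  (forall m, (0 < m <= k)%N -> binom_conv n X m = 0) ->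
  (forall m, (0 < m <= k)%N -> binom_conv n Y m = 0) ->
  forall m, (m <= k)%N -> X m = Y m.
Proof.
move=> XY0 convX convY; elim/ltn_ind => -[//|m] IHm le_mk.
have /eqP := convX m.+1 le_mk; have /eqP := convY m.+1 le_mk.
rewrite !binom_convE !addr_eq0 => /eqP-> /eqP->; congr (- _).
by apply: eq_bigr => j _; rewrite IHm //; lia.
Qed.

End BinomialConvolution.

Section FfunCons.
Variables (T : Type) (r : nat).

Definition ffun_cons (p : T * {ffun 'I_r -> T}) : {ffun 'I_r.+1 -> T} :=
  [ffun i => oapp p.2 p.1 (unlift ord0 i)].

Definition ffun_uncons (c : {ffun 'I_r.+1 -> T}) : T * {ffun 'I_r -> T} :=
  (c ord0, [ffun j => c (lift ord0 j)]).

Lemma ffun_cons0 p : ffun_cons p ord0 = p.1.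
Proof. by rewrite ffunE unlift_none. Qed.

Lemma ffun_consS p j : ffun_cons p (lift ord0 j) = p.2 j.
Proof. by rewrite ffunE liftK. Qed.

Lemma ffun_consK : cancel ffun_cons ffun_uncons.
Proof.
move=> [x f]; rewrite /ffun_uncons ffun_cons0; congr (_, _).
by apply/ffunP => j; rewrite ffunE ffun_consS.
Qed.

Lemma ffun_unconsK : cancel ffun_uncons ffun_cons.
Proof.
by move=> c; apply/ffunP => i; rewrite ffunE; case: unliftP => [j|] -> /=; rewrite ?ffunE.
Qed.

End FfunCons.

Definition composes (m : nat) {K r : nat} (c : {ffun 'I_r -> 'I_K}) : bool :=
  [forall i, 0 < c i]%N && (\sum_(i < r) c i == m)%N.

Lemma composes_cons m K r (p : 'I_K * {ffun 'I_r -> 'I_K}) :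
  composes m (ffun_cons p) = (0 < p.1 <= m)%N && composes (m - p.1) p.2.
Proof.
case: p => x f /=; rewrite /composes big_ord_recl ffun_cons0.
under eq_bigr do rewrite ffun_consS.
have -> : [forall i, 0 < ffun_cons (x, f) i]%N = (0 < x)%N && [forall i, 0 < f i]%N.
  apply/forallP/andP => [pos|[x_gt0 /forallP f_pos] i].
    split; first by have := pos ord0; rewrite ffun_cons0.
    by apply/forallP => j; have := pos (lift ord0 j); rewrite ffun_consS.
  by case: (unliftP ord0 i) => [j|] ->; rewrite ?ffun_consS ?ffun_cons0.
rewrite -andbA /=; case: (leqP x m) => [le_xm|lt_mx]; rewrite ?andbT ?andbF.
- by do 2 apply: andb_id2l => _; apply/eqP/eqP; lia.
- by apply/negbTE/negP => /and3P[_ _ /eqP]; lia.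
Qed.

Section CompositionSum.
Variables (R : pzRingType) (n K : nat).

Definition comp_sum (r m : nat) : R :=
  \sum_(c : {ffun 'I_r -> 'I_K} | composes m c) \prod_(i < r) 'C(n, c i)%:R.

Lemma comp_sum_small r m : (m < r)%N -> comp_sum r m = 0.
Proof.
move=> lt_mr; apply: big1 => c /andP[/forallP c_gt0 /eqP sum_c]; exfalso.
have : (\sum_(i < r) 1 <= \sum_(i < r) c i)%N by apply: leq_sum => i _; apply: c_gt0.
by rewrite sum1_card card_ord sum_c leqNgt lt_mr.
Qed.

Lemma comp_sum0 m : comp_sum 0 m = (m == 0)%:R.
Proof.
rewrite /comp_sum (eq_bigl (fun=> m == 0)%N); last first.
  by move=> c; rewrite /composes big_ord0 eq_sym; case: forallP => // -[] [].
under eq_bigr do rewrite big_ord0.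
case: (m == 0)%N; last by rewrite big_pred0.
by rewrite sumr_const cardT -cardE card_ffun !card_ord expn0.
Qed.

Lemma comp_sumS r m : (m < K)%N ->
  comp_sum r.+1 m = \sum_(j < m) 'C(n, j.+1)%:R * comp_sum r (m - j.+1).
Proof.
move=> lt_mK; rewrite {1}/comp_sum (reindex (@ffun_cons _ r)) /=; last first.
  by exists (@ffun_uncons _ r) => c _; [apply: ffun_consK | apply: ffun_unconsK].
under eq_bigl do rewrite composes_cons.
under eq_bigr do rewrite big_ord_recl ffun_cons0.
under eq_bigr do under eq_bigr do rewrite ffun_consS.
rewrite -(pair_big_dep (fun x : 'I_K => 0 < x <= m)%N (fun x c => composes (m - x) c)
  (fun x c => 'C(n, x)%:R * \prod_(i < r) 'C(n, c i)%:R)) /=.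
under eq_bigr do rewrite -big_distrr.
rewrite -(big_ord_widen_cond _ (fun x => 0 < x)%N
  (fun x => 'C(n, x)%:R * comp_sum r (m - x)) lt_mK).
rewrite big_mkcond big_ord_recl /= add0r.
by apply: eq_bigr => j _; rewrite /bump add1n.
Qed.

End CompositionSum.

Section AlternatingCompositionSum.
Variables (R : pzRingType) (n k : nat).

Definition alt_comp_sum (m : nat) : R :=
  \sum_(r < k.+1) (-1) ^+ r * comp_sum R n k.+1 r m.

Lemma alt_comp_sum0 : alt_comp_sum 0 = 1.
Proof.
rewrite /alt_comp_sum big_ord_recl comp_sum0 mulr1 big1 ?addr0 // => r _.
by rewrite comp_sum_small ?mulr0.
Qed.

Lemma binom_conv_alt_comp_sum m :
  (0 < m <= k)%N -> binom_conv n alt_comp_sum m = 0.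
Proof.
case: m => // m /= lt_mk; have lt_mk1 : (m.+1 < k.+1)%N by [].
rewrite binom_convE /alt_comp_sum big_ord_recl comp_sum0 mulr0 add0r.
under eq_bigr do rewrite (comp_sumS _ _ _ lt_mk1) exprS mulN1r mulNr big_distrr.
rewrite sumrN exchange_big /= addrC; apply/eqP; rewrite subr_eq0; apply/eqP.
apply: eq_bigr => j _; rewrite big_ord_recr /= comp_sum_small ?mulr0 ?addr0; last by lia.
rewrite big_distrr; apply: eq_bigr => r _.
by rewrite subSS mulrA -commr_sign -mulrA.
Qed.

End AlternatingCompositionSum.

Lemma alt_comp_sum_neg_binom (R : pzRingType) p k m : (m <= k)%N ->
  alt_comp_sum R p.+1 k m = neg_binom R p m.
Proof.
apply: (binom_conv_eq0_uniq (n := p.+1)).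
- by rewrite alt_comp_sum0 /neg_binom addn0 bin0 mulr1.
- exact: binom_conv_alt_comp_sum.
- by case=> // i _; apply: binom_conv_neg_binom.
Qed.

Theorem theorem3 (n k : nat) (hn : (0 < n)%N) (hk : (0 < k)%N) :
  \sum_(1 <= r < k.+1)
     (-1) ^+ (k - r) *
     \sum_(c : {ffun 'I_r -> 'I_k.+1} | is_composition c)
        \prod_(i < r) ('C(n, c i))%:R
  = ('C(n + k - 1, k))%:R :> int.
Proof.
(* [is_composition] is [composes k] with parts bounded by [K = k.+1]. *)
case: n hn => // p _; rewrite addSn subn1 /=.
transitivity ((-1) ^+ k * alt_comp_sum int p.+1 k k).
  rewrite /alt_comp_sum big_distrr big_ord_recl comp_sum0 eqn0Ngt hk /= mulr0n !mulr0 add0r.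
  rewrite big_add1 big_mkord /=; apply: eq_bigr => r _.
  by rewrite mulrA -signr_subn.
by rewrite alt_comp_sum_neg_binom // /neg_binom mulrA -expr2 sqrr_sign mul1r.
Qed.
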